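(* Let $s\in\mathbb{N}$, $m\ge s-1$, $n=9m$, $w_1,\dots,w_s\in\mathbb{C}$, $X=X(w_1,\dots,w_s)$, and let $\phi\in\mathbb{C}_m(\mathbb{Z})$ be a reproducing filter for $X$ with $\|\phi\|_2^2\le 2s/(2m+1)$. Let $\mathsf{S}_n(\phi)=\{z\in\mathbb{T}_n:|\phi(z)|\ge1\}$, let $\mathbf{E}_{m,n}(\phi)$ be the optimal value and $\rho^X$ an optimal solution of $$\min_{\rho\in\mathbb{C}_{5m}(\mathbb{Z})}\Big\{\sup_{z\in\mathbb{T}}|\rho(z)|:\ \rho(z)\phi(z)^2=1\ \ \forall z\in\mathsf{S}_n(\phi)\Big\},$$ and let $\varphi^X\in\mathbb{C}(\mathbb{Z})$ be defined by $\varphi^X(z)=\phi(z)^2+\rho^X(z)\big(\phi(z)^2-\phi(z)^4\big)$. Then $$\max\{\|\mathcal{F}_n[\varphi^X]\|_1,\,18s\|\mathcal{F}_n[\varphi^X]\|_\infty\}\le\frac{36s}{\sqrt{2n+1}}\big(\mathbf{E}_{m,n}(\phi)+1\big).$$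
   Context: $\mathbb{C}(\mathbb{Z})$: two-sided complex sequences; $\mathbb{C}_p(\mathbb{Z})$: those with $x_t=0$ for $|t|>p$. Each $u\in\mathbb{C}_p(\mathbb{Z})$ is identified with its $z$-transform (Laurent polynomial) $u(z)=\sum_\tau u_\tau z^{-\tau}$; products of Laurent polynomials correspond to convolutions $(u*v)_t=\sum_\tau u_\tau v_{t-\tau}$. $(\Delta x)_t=x_{t-1}$; $X(w_1,\dots,w_s)=\{x:\mathsf{f}(\Delta)x=0\}$ with $\mathsf{f}(z)=\prod_k(1-w_kz)$; $\phi$ is reproducing if $\phi*x=x$ for all $x\in X$. $\mathbb{T}$ is the unit circle and $\mathbb{T}_n=\{\exp(i2\pi k/(2n+1)):k=-n,\dots,n\}$. DFT $(\mathcal{F}_n[u])_k=(2n+1)^{-1/2}\sum_{|\tau|\le n}\exp(-i2\pi k\tau/(2n+1))u_\tau$, $k=0,\dots,2n$. *)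

From Stdlib Require Import Reals ZArith List.
From Coquelicot Require Import Coquelicot.
Open Scope R_scope.

Definition seqC := Z -> C.

Definition finsupp (p : nat) (u : seqC) : Prop :=
  forall t : Z, (Z.of_nat p < Z.abs t)%Z -> u t = RtoC 0.

Definition sumZ (p : nat) (F : Z -> C) : C :=
  sum_n (fun j : nat => F (Z.of_nat j - Z.of_nat p)%Z) (2 * p).

(* integer power z^k, k in Z (z <> 0 intended for k < 0) *)
Definition cpowZ (z : C) (k : Z) : C :=
  if (0 <=? k)%Z then pow_n z (Z.to_nat k)
  else Cinv (pow_n z (Z.to_nat (- k))).

Definition ztr (p : nat) (u : seqC) (z : C) : C :=
  sumZ p (fun tau => Cmult (u tau) (cpowZ z (- tau))).

Definition conv (p : nat) (u v : seqC) : seqC :=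
  fun t => sumZ p (fun tau => Cmult (u tau) (v (t - tau)%Z)).

(* (1 - w Delta) x, with (Delta x)_t = x_{t-1} *)
Definition factor_op (w : C) (x : seqC) : seqC :=
  fun t => Cminus (x t) (Cmult w (x (t - 1)%Z)).

(* f(Delta) x with f(z) = prod_k (1 - w_k z) *)
Fixpoint fDelta (ws : list C) (x : seqC) : seqC :=
  match ws with
  | nil => x
  | w :: ws' => factor_op w (fDelta ws' x)
  end.

Definition inX (ws : list C) (x : seqC) : Prop :=
  forall t, fDelta ws x t = RtoC 0.

Definition reproducing (m : nat) (ws : list C) (phi : seqC) : Prop :=
  forall x, inX ws x -> forall t, conv m phi x t = x t.

Definition l2sq (p : nat) (u : seqC) : R :=
  sum_n (fun j : nat => (Cmod (u (Z.of_nat j - Z.of_nat p)%Z)) ^ 2) (2 * p).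

Definition cis (theta : R) : C := (cos theta, sin theta).

Definition Tn_pt (n : nat) (k : Z) : C :=
  cis (2 * PI * IZR k / INR (2 * n + 1)).

Definition supT (p : nat) (u : seqC) : R :=
  real (Lub_Rbar (fun r => exists theta : R, r = Cmod (ztr p u (cis theta)))).

Definition feasible (m n : nat) (phi rho : seqC) : Prop :=
  finsupp (5 * m) rho /\
  forall k : Z, (- Z.of_nat n <= k <= Z.of_nat n)%Z ->
    1 <= Cmod (ztr m phi (Tn_pt n k)) ->
    Cmult (ztr (5 * m) rho (Tn_pt n k)) (pow_n (ztr m phi (Tn_pt n k)) 2) = RtoC 1.

Definition dft (n : nat) (u : seqC) (k : nat) : C :=
  Cmult (RtoC (/ sqrt (INR (2 * n + 1))))
    (sumZ n (fun tau => Cmult (cis (- (2 * PI * INR k * IZR tau / INR (2 * n + 1))))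
                              (u tau))).

Definition dft_norm1 (n : nat) (u : seqC) : R :=
  sum_n (fun k => Cmod (dft n u k)) (2 * n).

Definition dft_norminf (n : nat) (u : seqC) : R :=
  fold_right Rmax 0 (map (fun k => Cmod (dft n u k)) (seq 0 (2 * n + 1))).

(* phi^X = phi^2 + rho (phi^2 - phi^4), via convolutions *)
Definition phiX (m : nat) (phi rho : seqC) : seqC :=
  let phi2 := conv m phi phi in
  let phi4 := conv (2 * m) phi2 phi2 in
  fun t => Cplus (phi2 t) (conv (5 * m) rho (fun u => Cminus (phi2 u) (phi4 u)) t).

From Stdlib Require Import Reals ZArith List Lia Lra.
From Coquelicot Require Import Coquelicot.
Open Scope R_scope.

(* At the points z_k = exp(i 2 pi k / (2n+1)) the DFT of phi^X is (2n+1)^(-1/2) phi^X(z_k), and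
   phi^X(z) = phi(z)^2 + rho(z) (phi(z)^2 - phi(z)^4).  Where |phi(z_k)| >= 1 the constraint
   rho phi^2 = 1 forces phi^X(z_k) = 1; elsewhere |phi^X(z_k)| <= |phi(z_k)|^2 (1 + 2E).  So
   |phi^X(z_k)| is at most 1 + 2E and at most (2 + 2E) |phi(z_k)|^2, and the discrete Parseval
   identity at the 2n+1 > 2m sample points gives sum_k |phi(z_k)|^2 = (2n+1) ||phi||_2^2 <= 18 s. *)

Section IntervalSums.

Local Open Scope C_scope.

Fixpoint zsum (a : Z) (L : nat) (F : Z -> C) : C :=
  match L with
  | O => 0
  | S L' => zsum a L' F + F (a + Z.of_nat L')%Z
  end.

Lemma zsum_ext a L (F G : Z -> C) :
  (forall t, (a <= t < a + Z.of_nat L)%Z -> F t = G t) -> zsum a L F = zsum a L G.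
Proof.
induction L as [|L IH]; intros H; simpl; [reflexivity|].
rewrite IH, H; [reflexivity | lia | intros; apply H; lia].
Qed.

Lemma zsum_eq0 a L (F : Z -> C) :
  (forall t, (a <= t < a + Z.of_nat L)%Z -> F t = 0) -> zsum a L F = 0.
Proof.
induction L as [|L IH]; intros H; simpl; [reflexivity|].
rewrite IH, H; [ring | lia | intros; apply H; lia].
Qed.

Lemma zsum_plus a L (F G : Z -> C) : zsum a L (fun t => F t + G t) = zsum a L F + zsum a L G.
Proof. induction L as [|L IH]; simpl; [|rewrite IH]; ring. Qed.

Lemma zsum_minus a L (F G : Z -> C) : zsum a L (fun t => F t - G t) = zsum a L F - zsum a L G.
Proof. induction L as [|L IH]; simpl; [|rewrite IH]; ring. Qed.

Lemma zsum_mull a L c (F : Z -> C) : zsum a L (fun t => c * F t) = c * zsum a L F.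
Proof. induction L as [|L IH]; simpl; [|rewrite IH]; ring. Qed.

Lemma zsum_mulr a L c (F : Z -> C) : zsum a L (fun t => F t * c) = zsum a L F * c.
Proof. induction L as [|L IH]; simpl; [|rewrite IH]; ring. Qed.

Lemma zsum_conj a L (F : Z -> C) : Cconj (zsum a L F) = zsum a L (fun t => Cconj (F t)).
Proof.
induction L as [|L IH]; simpl; [apply injective_projections; simpl; ring|].
now rewrite Cplus_conj, IH.
Qed.

Lemma zsum_const a L c : zsum a L (fun _ => c) = INR L * c.
Proof. induction L as [|L IH]; simpl zsum; [simpl INR | rewrite IH, S_INR, RtoC_plus]; ring. Qed.

Lemma zsum_cat a L1 L2 (F : Z -> C) :
  zsum a (L1 + L2) F = zsum a L1 F + zsum (a + Z.of_nat L1) L2 F.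
Proof.
induction L2 as [|L2 IH]; simpl.
- rewrite Nat.add_0_r; ring.
- rewrite Nat.add_succ_r; simpl; rewrite IH.
  replace (a + Z.of_nat (L1 + L2))%Z with (a + Z.of_nat L1 + Z.of_nat L2)%Z by lia.
  ring.
Qed.

Lemma zsum_exchange a L b M (G : Z -> Z -> C) :
  zsum a L (fun t => zsum b M (G t)) = zsum b M (fun u => zsum a L (fun t => G t u)).
Proof.
induction L as [|L IH]; simpl.
- symmetry; now apply zsum_eq0.
- now rewrite IH, <- zsum_plus.
Qed.

Lemma zsum_shift a L (F : Z -> C) d : zsum a L (fun t => F (t - d)%Z) = zsum (a - d) L F.
Proof.
induction L as [|L IH]; simpl; [reflexivity|].
now rewrite IH; replace (a + Z.of_nat L - d)%Z with (a - d + Z.of_nat L)%Z by lia.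
Qed.

Lemma zsum_narrow a L c M (F : Z -> C) :
  (a <= c)%Z -> (c + Z.of_nat M <= a + Z.of_nat L)%Z ->
  (forall t, (a <= t < a + Z.of_nat L)%Z -> (t < c \/ c + Z.of_nat M <= t)%Z -> F t = 0) ->
  zsum a L F = zsum c M F.
Proof.
intros Hac HcM HF.
replace L with (Z.to_nat (c - a) + M + Z.to_nat (a + Z.of_nat L - c - Z.of_nat M))%nat
  by lia.
rewrite !zsum_cat.
replace (a + Z.of_nat (Z.to_nat (c - a)))%Z with c by lia.
replace (a + Z.of_nat (Z.to_nat (c - a) + M))%Z with (c + Z.of_nat M)%Z by lia.
rewrite (zsum_eq0 a), (zsum_eq0 (c + Z.of_nat M)); [ring | |];
  intros t Ht; apply HF; lia.
Qed.

Lemma zsum_single a L c (F : Z -> C) :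
  (a <= c < a + Z.of_nat L)%Z ->
  (forall t, (a <= t < a + Z.of_nat L)%Z -> t <> c -> F t = 0) -> zsum a L F = F c.
Proof.
intros Hc HF.
rewrite (zsum_narrow a L c 1); [simpl; rewrite Z.add_0_r; ring | lia | lia |].
intros t Ht Ht'; apply HF; lia.
Qed.

Lemma sum_n_zsum (f : nat -> C) N : sum_n f N = zsum 0 (S N) (fun t => f (Z.to_nat t)).
Proof.
induction N as [|N IH].
- rewrite sum_O; simpl; ring.
- rewrite sum_Sn, IH.
  change (zsum 0 (S (S N)) ?G) with (zsum 0 (S N) G + G (0 + Z.of_nat (S N))%Z).
  now rewrite Z.add_0_l, Nat2Z.id.
Qed.

Lemma sumZ_zsum p F : sumZ p F = zsum (- Z.of_nat p) (S (2 * p)) F.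
Proof.
unfold sumZ; rewrite sum_n_zsum.
replace (- Z.of_nat p)%Z with (0 - Z.of_nat p)%Z by lia.
rewrite <- zsum_shift; apply zsum_ext; intros t Ht; f_equal; lia.
Qed.

Lemma RtoC_sum_n (f : nat -> R) N : RtoC (sum_n f N) = sum_n (fun k => RtoC (f k)) N.
Proof.
induction N as [|N IH]; [now rewrite !sum_O|].
rewrite !sum_Sn, <- IH; apply RtoC_plus.
Qed.

End IntervalSums.

Section UnitCircle.

Local Open Scope C_scope.

Lemma cis_0 : cis 0 = 1.
Proof. unfold cis; now rewrite cos_0, sin_0. Qed.

Lemma cis_add a b : cis a * cis b = cis (a + b).
Proof.
unfold cis; apply injective_projections; simpl; [rewrite cos_plus | rewrite sin_plus]; ring.
Qed.

Lemma Cconj_cis a : Cconj (cis a) = cis (- a).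
Proof. unfold cis, Cconj; simpl; now rewrite cos_neg, sin_neg. Qed.

Lemma Cmod_cis a : Cmod (cis a) = 1%R.
Proof.
unfold Cmod, cis; simpl.
replace (cos a * (cos a * 1) + sin a * (sin a * 1))%R with 1%R; [apply sqrt_1|].
generalize (sin2_cos2 a); unfold Rsqr; lra.
Qed.

Lemma cis_neq0 a : cis a <> 0.
Proof. intros H; generalize (Cmod_cis a); rewrite H, Cmod_0; lra. Qed.

Lemma pow_n_cis a k : pow_n (cis a) k = cis (INR k * a).
Proof.
induction k as [|k IH]; simpl pow_n.
- now rewrite Rmult_0_l, cis_0.
- change mult with Cmult; rewrite IH, cis_add, S_INR; f_equal; ring.
Qed.

Lemma Cinv_cis a : / cis a = cis (- a).
Proof.
replace (cis (- a)) with (cis (- a) * cis a * / cis a) by (field; apply cis_neq0).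
rewrite cis_add, Rplus_opp_l, cis_0; ring.
Qed.

Lemma cpowZ_cis a j : cpowZ (cis a) j = cis (IZR j * a).
Proof.
unfold cpowZ; destruct (Z.leb_spec 0 j).
- rewrite pow_n_cis, INR_IZR_INZ, Z2Nat.id by lia; reflexivity.
- rewrite pow_n_cis, Cinv_cis, INR_IZR_INZ, Z2Nat.id, opp_IZR by lia; f_equal; ring.
Qed.

Lemma cis_2PI_mult j : cis (IZR j * (2 * PI)) = 1.
Proof.
unfold cis; destruct (Z.leb_spec 0 j).
- replace (IZR j * (2 * PI))%R with (0 + 2 * INR (Z.to_nat j) * PI)%R
    by (rewrite INR_IZR_INZ, Z2Nat.id by lia; ring).
  now rewrite cos_period, sin_period, cos_0, sin_0.
- replace (IZR j * (2 * PI))%R with (- (0 + 2 * INR (Z.to_nat (- j)) * PI))%R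
    by (rewrite INR_IZR_INZ, Z2Nat.id, opp_IZR by lia; ring).
  rewrite cos_neg, sin_neg, cos_period, sin_period, cos_0, sin_0, Ropp_0; reflexivity.
Qed.

Lemma cis_add_2PI a : cis (a + 2 * PI) = cis a.
Proof.
rewrite <- cis_add, <- (Rmult_1_l (2 * PI)), (cis_2PI_mult 1); ring.
Qed.

Lemma cis_neq1 x : (0 < x < 2 * PI)%R -> cis x <> 1.
Proof.
intros Hx H.
assert (Hcos : cos x = 1%R) by (apply (f_equal fst) in H; exact H).
assert (Hsin : (0 < sin (x / 2))%R) by (apply sin_gt_0; lra).
replace x with (2 * (x / 2))%R in Hcos by field.
rewrite cos_2a_sin in Hcos; nra.
Qed.

Lemma zsum_cis_geom x L :
  (cis x - 1) * zsum 0 L (fun k => cis (IZR k * x)) = cis (INR L * x) - 1.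
Proof.
induction L as [|L IH]; simpl zsum.
- rewrite Rmult_0_l, cis_0; ring.
- rewrite Cmult_plus_distr_l, IH, <- INR_IZR_INZ, S_INR.
  replace ((INR L + 1) * x)%R with (x + INR L * x)%R by ring.
  rewrite <- cis_add; ring.
Qed.

Lemma zsum_roots_of_unity N j : (0 < Z.abs j < Z.of_nat N)%Z ->
  zsum 0 N (fun k => cis (IZR k * (2 * PI * IZR j / INR N))) = 0.
Proof.
intros Hj.
set (x := (2 * PI * IZR j / INR N)%R).
assert (HN : (0 < INR N)%R) by (apply lt_0_INR; lia).
assert (HxN : (x * INR N = 2 * PI * IZR j)%R) by (unfold x; field; lra).
assert (HjN : (- INR N < IZR j < INR N)%R).
{ rewrite INR_IZR_INZ, <- opp_IZR; split; apply IZR_lt; lia. }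
pose proof PI_RGT_0 as HPI.
assert (Hx1 : cis x <> 1).
{ destruct (Z.leb_spec 0 j) as [Hj0 | Hj0].
  - assert (Hj0' : (0 < IZR j)%R) by (apply IZR_lt; lia).
    apply cis_neq1; split; nra.
  - assert (Hj0' : (IZR j < 0)%R) by (apply IZR_lt; lia).
    rewrite <- cis_add_2PI; apply cis_neq1; split; nra. }
assert (Hgeom := zsum_cis_geom x N).
replace (INR N * x)%R with (IZR j * (2 * PI))%R in Hgeom by lra.
rewrite cis_2PI_mult in Hgeom.
set (S := zsum _ _ _) in *.
replace S with (/ (cis x - 1) * ((cis x - 1) * S)) by (field; now apply Cminus_eq_contra).
rewrite Hgeom; ring.
Qed.

End UnitCircle.

Section CircleTransform.

Local Open Scope C_scope.

Definition ztrT (p : nat) (u : seqC) (th : R) : C :=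
  zsum (- Z.of_nat p) (S (2 * p)) (fun tau => u tau * cis (- IZR tau * th)).

Lemma ztr_cis p u th : ztr p u (cis th) = ztrT p u th.
Proof.
unfold ztr, ztrT; rewrite sumZ_zsum; apply zsum_ext; intros t _.
now rewrite cpowZ_cis, opp_IZR.
Qed.

Lemma ztrT_widen p q u th : finsupp p u -> (p <= q)%nat -> ztrT q u th = ztrT p u th.
Proof.
intros Hu Hpq; unfold ztrT; apply zsum_narrow; try lia.
intros t _ Ht; rewrite Hu by lia; ring.
Qed.

Lemma ztrT_plus p u v th :
  ztrT p (fun t => u t + v t) th = ztrT p u th + ztrT p v th.
Proof. unfold ztrT; rewrite <- zsum_plus; apply zsum_ext; intros; ring. Qed.

Lemma ztrT_minus p u v th :
  ztrT p (fun t => u t - v t) th = ztrT p u th - ztrT p v th.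
Proof. unfold ztrT; rewrite <- zsum_minus; apply zsum_ext; intros; ring. Qed.

Lemma conv_finsupp p q u v : finsupp p u -> finsupp q v -> finsupp (p + q) (conv p u v).
Proof.
intros Hu Hv t Ht; unfold conv; rewrite sumZ_zsum; apply zsum_eq0; intros tau Htau.
rewrite Hv by lia; ring.
Qed.

Lemma ztrT_conv p q u v th : finsupp p u -> finsupp q v ->
  ztrT (p + q) (conv p u v) th = ztrT p u th * ztrT q v th.
Proof.
intros Hu Hv; unfold ztrT at 1, conv.
set (g := fun t => v t * cis (- IZR t * th)).
set (c := fun tau => u tau * cis (- IZR tau * th)).
transitivity (zsum (- Z.of_nat (p + q)) (S (2 * (p + q)))
  (fun t => zsum (- Z.of_nat p) (S (2 * p)) (fun tau => c tau * g (t - tau)%Z))).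
{ apply zsum_ext; intros t _; rewrite sumZ_zsum, <- zsum_mulr.
  apply zsum_ext; intros tau _; unfold c, g.
  replace (cis (- IZR t * th)) with (cis (- IZR tau * th) * cis (- IZR (t - tau) * th))
    by (rewrite cis_add, minus_IZR; f_equal; ring).
  ring. }
change (ztrT p u th) with (zsum (- Z.of_nat p) (S (2 * p)) c).
rewrite zsum_exchange, <- zsum_mulr.
apply zsum_ext; intros tau Htau.
rewrite zsum_mull, zsum_shift; f_equal.
apply zsum_narrow; try lia.
intros t _ Ht; unfold g; rewrite Hv by lia; ring.
Qed.

Lemma Cmod_ztr_le_supT p u th : (Cmod (ztr p u (cis th)) <= supT p u)%R.
Proof.
(* [supT] takes [real] of a [Lub_Rbar], which would be the junk value 0 for an unbounded set;
   the l1 norm of u bounds it. *)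
set (B := sum_n (fun j => Cmod (u (Z.of_nat j - Z.of_nat p)%Z)) (2 * p)).
assert (HB : forall th', (Cmod (ztr p u (cis th')) <= B)%R).
{ intros th'; unfold ztr, sumZ; rewrite Cmod_norm.
  refine (Rle_trans _ _ _ (norm_sum_n_m _ 0 (2 * p)) _); apply sum_n_m_le; intros j.
  now rewrite <- Cmod_norm, Cmod_mult, cpowZ_cis, Cmod_cis, Rmult_1_r; apply Rle_refl. }
unfold supT.
set (SS := fun r => exists th', r = Cmod (ztr p u (cis th'))).
destruct (Lub_Rbar_correct SS) as [Hub Hlub].
assert (Hle := Hub _ (ex_intro _ th eq_refl)).
assert (Hge : Rbar_le (Lub_Rbar SS) B) by (apply Hlub; intros x [th' ->]; apply HB).
destruct (Lub_Rbar SS); simpl in *; tauto.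
Qed.

End CircleTransform.

Section Parseval.

Local Open Scope C_scope.

Lemma RtoC_Cmod_ztrT_sqr p u th :
  RtoC (Cmod (ztrT p u th) ^ 2)%R =
  zsum (- Z.of_nat p) (S (2 * p)) (fun tp => zsum (- Z.of_nat p) (S (2 * p))
    (fun t => u t * Cconj (u tp) * cis (IZR (tp - t) * th))).
Proof.
rewrite Cmod2_conj; unfold ztrT at 2.
rewrite zsum_conj, <- zsum_mull; apply zsum_ext; intros tp _.
unfold ztrT; rewrite <- zsum_mulr; apply zsum_ext; intros t _.
rewrite Cmult_conj, Cconj_cis.
replace (cis (IZR (tp - t) * th)) with (cis (- IZR t * th) * cis (- (- IZR tp * th)))
  by (rewrite cis_add, minus_IZR; f_equal; ring).
ring.
Qed.

Lemma parseval_samples p N u : (2 * p < S N)%nat ->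
  sum_n (fun k => Cmod (ztrT p u (2 * PI * INR k / INR (S N))) ^ 2)%R N =
  (INR (S N) * l2sq p u)%R.
Proof.
intros HpN.
set (P := (- Z.of_nat p)%Z); set (L := S (2 * p)).
cut (RtoC (sum_n (fun k => Cmod (ztrT p u (2 * PI * INR k / INR (S N))) ^ 2)%R N) =
     RtoC (INR (S N) * l2sq p u)%R); [now intros H; injection H|].
rewrite RtoC_sum_n, sum_n_zsum, RtoC_mult.
transitivity (zsum 0 (S N) (fun k => zsum P L (fun tp => zsum P L (fun t =>
  u t * Cconj (u tp) * cis (IZR k * (2 * PI * IZR (tp - t) / INR (S N))))))).
{ apply zsum_ext; intros k Hk; rewrite RtoC_Cmod_ztrT_sqr.
  apply zsum_ext; intros tp _; apply zsum_ext; intros t _.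
  do 2 f_equal; rewrite INR_IZR_INZ, Z2Nat.id by lia; field.
  apply not_0_INR; lia. }
rewrite zsum_exchange.
unfold l2sq; rewrite RtoC_sum_n.
change (sum_n (fun k => RtoC (Cmod (u (Z.of_nat k - Z.of_nat p)%Z) ^ 2)%R) (2 * p))
  with (sumZ p (fun t => RtoC (Cmod (u t) ^ 2)%R)).
rewrite sumZ_zsum, <- zsum_mull; apply zsum_ext; intros tp Htp.
rewrite zsum_exchange, (zsum_single _ _ tp); [ | exact Htp | ].
- rewrite zsum_mull, Z.sub_diag, Cmod2_conj.
  rewrite (zsum_ext _ _ _ (fun _ => 1)), zsum_const; [ring|].
  intros k _; rewrite Rmult_0_r, Rdiv_0_l, Rmult_0_r; apply cis_0.
- intros t Ht Htp'; rewrite zsum_mull, zsum_roots_of_unity; [ring|].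
  unfold P, L in *; lia.
Qed.

End Parseval.

Section PhiX.

Local Open Scope C_scope.

Lemma ztrT_phiX m phi rho th : finsupp m phi -> finsupp (5 * m) rho ->
  ztrT (9 * m) (phiX m phi rho) th =
  ztrT m phi th ^ 2 + ztrT (5 * m) rho th * (ztrT m phi th ^ 2 - ztrT m phi th ^ 4).
Proof.
intros Hphi Hrho; unfold phiX; cbv zeta.
set (f := ztrT m phi th).
set (phi2 := conv m phi phi); set (phi4 := conv (2 * m) phi2 phi2).
assert (Hphi2 : finsupp (2 * m) phi2)
  by (replace (2 * m)%nat with (m + m)%nat by lia; now apply conv_finsupp).
assert (Hphi4 : finsupp (4 * m) phi4)
  by (replace (4 * m)%nat with (2 * m + 2 * m)%nat by lia; now apply conv_finsupp).
assert (Ephi2 : forall q, (2 * m <= q)%nat -> ztrT q phi2 th = f ^ 2).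
{ intros q Hq; rewrite (ztrT_widen (2 * m)) by assumption.
  replace (2 * m)%nat with (m + m)%nat by lia; unfold phi2; rewrite ztrT_conv by assumption.
  unfold f; ring. }
assert (Ephi4 : ztrT (4 * m) phi4 th = f ^ 4).
{ replace (4 * m)%nat with (2 * m + 2 * m)%nat by lia; unfold phi4.
  rewrite ztrT_conv, Ephi2 by (auto with arith); ring. }
set (d := fun t => phi2 t - phi4 t).
assert (Hd : finsupp (4 * m) d).
{ intros t Ht; unfold d; rewrite Hphi4, Hphi2 by lia; ring. }
rewrite ztrT_plus, Ephi2 by lia; f_equal.
rewrite (ztrT_widen (5 * m + 4 * m)), ztrT_conv by (auto using conv_finsupp; lia).
unfold d; rewrite ztrT_minus, Ephi2, Ephi4 by lia; reflexivity.
Qed.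

Lemma Cmod_phiX_value_le f r E : (0 <= E)%R -> (Cmod r <= E)%R ->
  ((1 <= Cmod f)%R -> r * f ^ 2 = 1) ->
  let g := f ^ 2 + r * (f ^ 2 - f ^ 4) in
  (Cmod g <= Cmod f ^ 2 * (2 + 2 * E))%R /\ (Cmod g <= 1 + 2 * E)%R.
Proof.
intros HE Hr Hfeas g.
pose proof (Cmod_ge_0 f) as Hf0.
destruct (Rle_lt_dec 1 (Cmod f)) as [Hf1 | Hf1].
- assert (Hg : g = 1).
  { unfold g; replace (r * (f ^ 2 - f ^ 4)) with (r * f ^ 2 * (1 - f ^ 2)) by ring.
    rewrite Hfeas by exact Hf1; ring. }
  rewrite Hg, Cmod_1; split; nra.
- assert (Hg : (Cmod g <= Cmod f ^ 2 + E * (Cmod f ^ 2 + Cmod f ^ 4))%R).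
  { unfold g, Cminus; eapply Rle_trans; [apply Cmod_triangle|].
    rewrite Cmod_mult, <- !Cmod_pow; apply Rplus_le_compat_l.
    apply Rmult_le_compat; [apply Cmod_ge_0 | apply Cmod_ge_0 | exact Hr |].
    eapply Rle_trans; [apply Cmod_triangle|]; rewrite Cmod_opp; apply Rle_refl. }
  assert (Hf2 : (0 <= Cmod f ^ 2 <= 1)%R) by (simpl; nra).
  assert (Hf4 : (Cmod f ^ 4 <= Cmod f ^ 2)%R)
    by (replace (Cmod f ^ 4)%R with (Cmod f ^ 2 * Cmod f ^ 2)%R by ring; nra).
  split; nra.
Qed.

End PhiX.

Lemma supT_ge0 p u : 0 <= supT p u.
Proof. eapply Rle_trans; [apply Cmod_ge_0 | apply (Cmod_ztr_le_supT p u 0)]. Qed.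

Lemma dft_ztrT n u k : dft n u k =
  (RtoC (/ sqrt (INR (2 * n + 1))) * ztrT n u (2 * PI * INR k / INR (2 * n + 1)))%C.
Proof.
unfold dft; f_equal; rewrite sumZ_zsum; unfold ztrT; apply zsum_ext; intros t _.
rewrite Cmult_comm; do 2 f_equal; unfold Rdiv; ring.
Qed.

Lemma Tn_pt_of_freq n k : (k <= 2 * n)%nat ->
  exists k', (- Z.of_nat n <= k' <= Z.of_nat n)%Z /\
             Tn_pt n k' = cis (2 * PI * INR k / INR (2 * n + 1)).
Proof.
intros Hk; unfold Tn_pt; destruct (Nat.le_gt_cases k n).
- exists (Z.of_nat k); split; [lia | now rewrite <- INR_IZR_INZ].
- exists (Z.of_nat k - Z.of_nat (2 * n + 1))%Z; split; [lia|].
  rewrite <- cis_add_2PI; f_equal.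
  rewrite minus_IZR, <- !INR_IZR_INZ; field; apply not_0_INR; lia.
Qed.

Lemma sum_n_le_loc (a b : nat -> R) N :
  (forall k, (k <= N)%nat -> a k <= b k) -> sum_n a N <= sum_n b N.
Proof.
induction N as [|N IH]; intros Hab.
- rewrite !sum_O; auto.
- rewrite !sum_Sn; apply Rplus_le_compat; auto.
Qed.

Lemma fold_right_Rmax_le (l : list R) c :
  0 <= c -> (forall x, In x l -> x <= c) -> fold_right Rmax 0 l <= c.
Proof.
induction l as [|x l IH]; simpl; intros Hc Hl; [exact Hc|].
apply Rmax_lub; auto.
Qed.

Section DftPhiX.

Variables (m : nat) (phi rho : seqC).
Hypothesis phi_supp : finsupp m phi.
Hypothesis rho_feasible : feasible m (9 * m) phi rho.

Local Notation N := (INR (2 * (9 * m) + 1)).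
Local Notation E := (supT (5 * m) rho).

Lemma sqrt_dft_length_gt0 : 0 < sqrt N.
Proof. apply sqrt_lt_R0, lt_0_INR; lia. Qed.

Lemma Cmod_dft_phiX_le k : (k <= 2 * (9 * m))%nat ->
  Cmod (dft (9 * m) (phiX m phi rho) k)
    <= / sqrt N * (Cmod (ztrT m phi (2 * PI * INR k / N)) ^ 2 * (2 + 2 * E)) /\
  Cmod (dft (9 * m) (phiX m phi rho) k) <= / sqrt N * (1 + 2 * E).
Proof.
intros Hk; destruct rho_feasible as [Hrho Hfeas].
pose proof (Rinv_0_lt_compat _ sqrt_dft_length_gt0) as Hinv.
destruct (Tn_pt_of_freq _ _ Hk) as [k' [Hk' HT]].
specialize (Hfeas k' Hk'); rewrite HT, !ztr_cis in Hfeas.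
rewrite dft_ztrT, Cmod_mult, Cmod_R, Rabs_pos_eq, ztrT_phiX by (auto; lra).
destruct (Cmod_phiX_value_le (ztrT m phi (2 * PI * INR k / N))
            (ztrT (5 * m) rho (2 * PI * INR k / N)) E) as [Hsmall Hbig].
- apply supT_ge0.
- rewrite <- ztr_cis; apply Cmod_ztr_le_supT.
- exact Hfeas.
- split; apply Rmult_le_compat_l; auto; lra.
Qed.

Lemma dft_norm1_phiX_le :
  dft_norm1 (9 * m) (phiX m phi rho) <= / sqrt N * (2 + 2 * E) * (N * l2sq m phi).
Proof.
unfold dft_norm1.
eapply Rle_trans.
{ apply (sum_n_le_loc _ (fun k => / sqrt N * (2 + 2 * E) *
                                  Cmod (ztrT m phi (2 * PI * INR k / N)) ^ 2)).
  intros k Hk; eapply Rle_trans; [apply (proj1 (Cmod_dft_phiX_le k Hk)) | right; ring]. }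
right; etransitivity; [apply (sum_n_mult_l (K := R_Ring)) | apply Rmult_eq_compat_l].
replace (2 * (9 * m) + 1)%nat with (S (2 * (9 * m))) by lia.
apply parseval_samples; lia.
Qed.

Lemma dft_norminf_phiX_le :
  dft_norminf (9 * m) (phiX m phi rho) <= / sqrt N * (1 + 2 * E).
Proof.
pose proof (Rinv_0_lt_compat _ sqrt_dft_length_gt0); pose proof (supT_ge0 (5 * m) rho).
unfold dft_norminf; apply fold_right_Rmax_le; [nra|].
intros x Hx; apply in_map_iff in Hx as [k [<- Hk]]; apply in_seq in Hk.
apply Cmod_dft_phiX_le; lia.
Qed.

End DftPhiX.

Lemma dft_length_mul_le m s x : x <= 2 * INR s / INR (2 * m + 1) ->
  INR (2 * (9 * m) + 1) * x <= 18 * INR s.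
Proof.
intros Hx.
assert (Hm : 0 < INR (2 * m + 1)) by (apply lt_0_INR; lia).
assert (H9 : INR (2 * (9 * m) + 1) <= 9 * INR (2 * m + 1))
  by (rewrite !plus_INR, !mult_INR; simpl; lra).
apply Rle_trans with (INR (2 * (9 * m) + 1) * (2 * INR s / INR (2 * m + 1))).
- apply Rmult_le_compat_l; [apply pos_INR | exact Hx].
- pose proof (pos_INR s).
  apply Rle_trans with (9 * INR (2 * m + 1) * (2 * INR s / INR (2 * m + 1))).
  + apply Rmult_le_compat_r; [apply Rdiv_le_0_compat; lra | exact H9].
  + right; field; lra.
Qed.

Theorem lemma1 (s m n : nat) (ws : list C) (phi rhoX : seqC) (E : R) :
  (s <= m + 1)%nat ->
  n = (9 * m)%nat ->
  length ws = s ->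
  finsupp m phi ->
  reproducing m ws phi ->
  l2sq m phi <= 2 * INR s / INR (2 * m + 1) ->
  feasible m n phi rhoX ->
  (forall rho, feasible m n phi rho -> supT (5 * m) rhoX <= supT (5 * m) rho) ->
  E = supT (5 * m) rhoX ->
  Rmax (dft_norm1 n (phiX m phi rhoX)) (18 * INR s * dft_norminf n (phiX m phi rhoX))
    <= 36 * INR s / sqrt (INR (2 * n + 1)) * (E + 1).
Proof.
intros _ -> _ Hphi _ Hl2 Hfeas _ ->.
pose proof (supT_ge0 (5 * m) rhoX) as HE.
pose proof (Rinv_0_lt_compat _ (sqrt_dft_length_gt0 m)) as Hinv.
pose proof (dft_length_mul_le m s _ Hl2) as Hbudget.
pose proof (pos_INR s) as Hs.
unfold Rdiv; apply Rmax_lub.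
- eapply Rle_trans; [apply (dft_norm1_phiX_le m phi rhoX Hphi Hfeas)|].
  assert (0 <= / sqrt (INR (2 * (9 * m) + 1)) * (2 + 2 * supT (5 * m) rhoX)) by nra.
  nra.
- eapply Rle_trans.
  { apply Rmult_le_compat_l; [lra | apply (dft_norminf_phiX_le m phi rhoX Hphi Hfeas)]. }
  assert (0 <= INR s * / sqrt (INR (2 * (9 * m) + 1))) by nra.
  nra.
Qed.
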